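(* Let $f:\mathbb{R}^d\to\mathbb{R}$ be convex and differentiable with a minimizer $x_\ast$. Let $x_0\in\mathbb{R}^d$, $r_\epsilon>0$, and let $g_0,g_1,\dots$ be vectors in $\mathbb{R}^d$ (the (stochastic) gradients used at $x_0,x_1,\dots$). Consider the DoWG iterates $x_{k+1}=x_k-\eta_k g_k$ with \[ \eta_k=\frac{\overline{r}_k^2}{\sqrt{v_k}},\qquad \overline{r}_k=\max\Big(\max_{i\le k}\|x_i-x_0\|,\ r_\epsilon\Big),\qquad v_k=\sum_{i=0}^k \overline{r}_i^2\|g_i\|^2 . \] Let $d_k=\|x_k-x_\ast\|$ and $\overline{d}_t=\max_{k\le t} d_k$. Then for every $t$, \[ \sum_{k=0}^{t-1}\overline{r}_k^2\langle\nabla f(x_k),x_k-x_\ast\rangle \le 2\overline{r}_t\big[\overline{d}_t+\overline{r}_t\big]\sqrt{v_{t-1}}+\sum_{k=0}^{t-1}\overline{r}_k^2\langle\nabla f(x_k)-g_k,x_k-x_\ast\rangle . \]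
   Context: All norms are Euclidean. The stepsizes are assumed well defined (i.e., $v_k>0$). *)

From HB Require Import structures.
From mathcomp Require Import all_boot all_order all_algebra.
From mathcomp Require Import all_classical all_reals all_analysis.
Set Implicit Arguments. Unset Strict Implicit. Unset Printing Implicit Defensive.
Import Order.TTheory GRing.Theory Num.Theory.
Import numFieldNormedType.Exports.
Local Open Scope ring_scope.

Definition dotv {R : realType} {d : nat} (u v : 'rV[R]_d) : R := (u *m v^T) 0 0.
Definition enorm {R : realType} {d : nat} (u : 'rV[R]_d) : R := Num.sqrt (dotv u u).

Definition grad {R : realType} {d : nat} (f : 'rV[R]_d -> R) (x : 'rV[R]_d)
  : 'rV[R]_d := \row_(i < d) derive f x (delta_mx 0 i).

Definition convex_fun {R : realType} {d : nat} (f : 'rV[R]_d -> R) : Prop :=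
  forall (x y : 'rV[R]_d) (t : R), 0 <= t -> t <= 1 ->
    f (t *: x + (1 - t) *: y) <= t * f x + (1 - t) * f y.

Definition rbar {R : realType} {d : nat} (x : nat -> 'rV[R]_d) (reps : R) (k : nat) : R :=
  Num.max (\big[Num.max/0]_(i < k.+1) enorm (x i - x 0%N)) reps.

(* Vsum n = sum_{i < n} rbar_i^2 ||g_i||^2 ; so v_k = Vsum (k+1), v_{t-1} = Vsum t *)
Definition Vsum {R : realType} {d : nat} (x g : nat -> 'rV[R]_d) (reps : R) (n : nat) : R :=
  \sum_(i < n) rbar x reps i ^+ 2 * enorm (g i) ^+ 2.

Definition vk {R : realType} {d : nat} (x g : nat -> 'rV[R]_d) (reps : R) (k : nat) : R :=
  Vsum x g reps k.+1.

Definition dowg_eta {R : realType} {d : nat} (x g : nat -> 'rV[R]_d) (reps : R) (k : nat) : R :=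
  rbar x reps k ^+ 2 / Num.sqrt (vk x g reps k).

Definition dbar {R : realType} {d : nat} (x : nat -> 'rV[R]_d) (xs : 'rV[R]_d) (t : nat) : R :=
  \big[Num.max/0]_(k < t.+1) enorm (x k - xs).

From HB Require Import structures.
From mathcomp Require Import all_boot all_order all_algebra.
From mathcomp Require Import all_classical all_reals all_analysis.
From mathcomp Require Import ring lra.
Import Order.TTheory GRing.Theory Num.Theory.
Import numFieldNormedType.Exports.
Local Open Scope ring_scope.
Set Implicit Arguments.
Unset Strict Implicit.
Unset Printing Implicit Defensive.

(* Put u_k = x_k - x_*.  Since x_{k+1} - x_* = u_k - (rbar_k^2 / sqrt v_k) g_k, expanding
   the square gives the exact identity
     rbar_k^2 <g_k, u_k> = sqrt v_k (d_k^2 - d_{k+1}^2) / 2 + rbar_k^2 (rbar_k^2 |g_k|^2) / (2 sqrt v_k).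
   Summed over k < t, the first part is an Abel sum with nondecreasing weights sqrt v_k, hence at
   most sqrt v_{t-1} (dbar_t^2 - d_t^2) / 2 <= 2 rbar_t dbar_t sqrt v_{t-1}, because
   dbar_t <= d_t + 2 rbar_t by the triangle inequality through x_0.  In the second part
   rbar_k <= rbar_t, and (v_k - v_{k-1}) / sqrt v_k <= 2 (sqrt v_k - sqrt v_{k-1}) telescopes to
   2 sqrt v_{t-1}. *)

Section EuclideanNorm.
Variables (R : realType) (d : nat).
Implicit Types (u v w : 'rV[R]_d) (a : R).

Lemma dotvC u v : dotv u v = dotv v u.
Proof. by rewrite /dotv -{1}(trmxK u) -trmx_mul mxE. Qed.

Lemma dotvDl u v w : dotv (u + v) w = dotv u w + dotv v w.
Proof. by rewrite /dotv mulmxDl mxE. Qed.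

Lemma dotvBl u v w : dotv (u - v) w = dotv u w - dotv v w.
Proof. by rewrite /dotv mulmxBl [LHS]mxE [X in _ + X]mxE. Qed.

Lemma dotvZl a u v : dotv (a *: u) v = a * dotv u v.
Proof. by rewrite /dotv -scalemxAl mxE. Qed.

Lemma dotvDr u v w : dotv u (v + w) = dotv u v + dotv u w.
Proof. by rewrite dotvC dotvDl !(dotvC u). Qed.

Lemma dotvBr u v w : dotv u (v - w) = dotv u v - dotv u w.
Proof. by rewrite dotvC dotvBl !(dotvC u). Qed.

Lemma dotvZr a u v : dotv u (a *: v) = a * dotv u v.
Proof. by rewrite dotvC dotvZl dotvC. Qed.

Lemma dotv0l v : dotv 0 v = 0.
Proof. by rewrite /dotv mul0mx mxE. Qed.

Lemma dotvvE u : dotv u u = \sum_(i < d) u 0 i ^+ 2.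
Proof. by rewrite /dotv mxE; apply: eq_bigr => i _; rewrite mxE. Qed.

Lemma dotvv_ge0 u : 0 <= dotv u u.
Proof. by rewrite dotvvE sumr_ge0 // => i _; rewrite sqr_ge0. Qed.

Lemma dotvv_eq0 u : (dotv u u == 0) = (u == 0).
Proof.
apply/idP/eqP => [|->]; last by rewrite dotv0l.
rewrite dotvvE psumr_eq0 => [/allP u0|i _]; last exact: sqr_ge0.
apply/rowP => i; rewrite mxE; apply/eqP.
by rewrite -sqrf_eq0; apply: u0; rewrite mem_index_enum.
Qed.

Lemma enorm_sqr u : enorm u ^+ 2 = dotv u u.
Proof. by rewrite sqr_sqrtr // dotvv_ge0. Qed.

Lemma enorm_ge0 u : 0 <= enorm u.
Proof. exact: sqrtr_ge0. Qed.

Lemma enorm_eq0 u : (enorm u == 0) = (u == 0).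
Proof. by rewrite sqrtr_eq0 le_eqVlt ltNge dotvv_ge0 orbF dotvv_eq0. Qed.

Lemma enorm_gt0 u : (0 < enorm u) = (u != 0).
Proof. by rewrite lt_def enorm_eq0 enorm_ge0 andbT. Qed.

Lemma enormN u : enorm (- u) = enorm u.
Proof. by rewrite /enorm -scaleN1r dotvZl dotvC dotvZl !mulN1r opprK. Qed.

Lemma enormBZ_sqr u v a :
  enorm (u - a *: v) ^+ 2 = enorm u ^+ 2 - 2 * a * dotv v u + a ^+ 2 * enorm v ^+ 2.
Proof.
by rewrite !enorm_sqr dotvBl !dotvBr !dotvZl !dotvZr (dotvC u v); ring.
Qed.

Lemma dotv_le_enorm u v : dotv u v <= enorm u * enorm v.
Proof.
have [->|u_neq0] := eqVneq u 0; first by rewrite dotv0l mulr_ge0 ?enorm_ge0.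
have [->|v_neq0] := eqVneq v 0; first by rewrite dotvC dotv0l mulr_ge0 ?enorm_ge0.
have a_gt0 : 0 < enorm u by rewrite enorm_gt0.
have b_gt0 : 0 < enorm v by rewrite enorm_gt0.
set a := enorm u in a_gt0 *; set b := enorm v in b_gt0 *.
(* 0 <= |u - (a / b) v|^2 = 2 a^2 - 2 (a / b) <u, v> *)
have := enormBZ_sqr u v (a / b).
rewrite -/a -/b expr_div_n divfK ?expf_neq0 ?gt_eqF // dotvC => expand.
have : a / b * dotv u v <= a / b * (a * b).
  have -> : a / b * (a * b) = a ^+ 2 by field; rewrite gt_eqF.
  by have := sqr_ge0 (enorm (u - a / b *: v)); lra.
by rewrite ler_pM2l ?divr_gt0.
Qed.

Lemma enormD_le u v : enorm (u + v) <= enorm u + enorm v.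
Proof.
have ab_ge0 : 0 <= enorm u + enorm v by rewrite addr_ge0 ?enorm_ge0.
rewrite -(ler_pXn2r (_ : 0 < 2)%N) ?nnegrE ?enorm_ge0 //.
rewrite enorm_sqr dotvDl !dotvDr (dotvC v u).
by have := dotv_le_enorm u v; rewrite sqrrD !enorm_sqr; lra.
Qed.

Lemma dotv_step_identity u v c s : s != 0 ->
  c * dotv v u =
  s * (enorm u ^+ 2 - enorm (u - (c / s) *: v) ^+ 2) / 2 + c * (c * enorm v ^+ 2 / s) / 2.
Proof. by move=> s_neq0; rewrite enormBZ_sqr; field. Qed.

End EuclideanNorm.

Lemma weighted_telescope_le (R : realDomainType) (w e : nat -> R) (M : R) n :
  0 <= w 0%N -> (forall k, w k <= w k.+1) -> (forall k, (k <= n)%N -> e k <= M) ->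
  \sum_(k < n) w k.+1 * (e k - e k.+1) <= w n * (M - e n).
Proof.
move=> w0_ge0 w_nondecr; elim: n => [|n IHn] e_le.
  by rewrite big_ord0 mulr_ge0 ?subr_ge0 ?e_le.
rewrite big_ord_recr /=.
have := IHn (fun k le_kn => e_le k (leqW le_kn)).
have : w n * (M - e n) <= w n.+1 * (M - e n) by rewrite ler_wpM2r ?subr_ge0 ?e_le.
lra.
Qed.

Lemma div_sqrt_increment_le (R : rcfType) (s a : R) : 0 <= s -> 0 <= a ->
  a / Num.sqrt (s + a) <= 2 * (Num.sqrt (s + a) - Num.sqrt s).
Proof.
move=> s_ge0 a_ge0; set p := Num.sqrt (s + a); set q := Num.sqrt s.
have q_ge0 : 0 <= q := sqrtr_ge0 s.
have q_le_p : q <= p by rewrite ler_sqrt ?lerDl ?addr_ge0.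
have [p_eq0|p_gt0] := eqVneq p 0.
  by rewrite p_eq0 invr0 mulr0 mulr_ge0 // subr_ge0 -p_eq0.
have a_eq : a = (p - q) * (p + q) by rewrite -subr_sqr !sqr_sqrtr ?addr_ge0 //; ring.
rewrite ler_pdivrMr ?lt_def ?p_gt0 ?sqrtr_ge0 // a_eq.
by rewrite -mulrA mulrCA ler_wpM2l ?subr_ge0 //; lra.
Qed.

Lemma sum_div_sqrt_partial_le (R : rcfType) (a : nat -> R) n : (forall k, 0 <= a k) ->
  \sum_(k < n) a k / Num.sqrt (\sum_(i < k.+1) a i) <= 2 * Num.sqrt (\sum_(i < n) a i).
Proof.
move=> a_ge0; elim: n => [|n IHn]; first by rewrite !big_ord0 sqrtr0 mulr0.
have sumS : \sum_(i < n.+1) a i = \sum_(i < n) a i + a n by rewrite big_ord_recr.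
have sum_ge0 : 0 <= \sum_(i < n) a i by apply: sumr_ge0.
have := div_sqrt_increment_le sum_ge0 (a_ge0 n).
rewrite big_ord_recr /= sumS.
lra.
Qed.

Section DoWG.
Variables (R : realType) (d : nat) (x g : nat -> 'rV[R]_d) (reps : R) (xs : 'rV[R]_d).

Local Notation r := (rbar x reps).
Local Notation V := (Vsum x g reps).
Local Notation D := (dbar x xs).

Lemma dist_le_rbar i t : (i <= t)%N -> enorm (x i - x 0%N) <= r t.
Proof.
move=> le_it; rewrite le_max; apply/orP; left.
exact: (le_bigmax _ (fun j : 'I_t.+1 => enorm (x j - x 0%N)) (Ordinal (le_it : i < t.+1)%N)).
Qed.

Lemma rbar_ge0 k : 0 <= r k.
Proof. exact: le_trans (enorm_ge0 _) (dist_le_rbar (leq0n k)). Qed.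

Lemma rbar_nondecr k t : (k <= t)%N -> r k <= r t.
Proof.
move=> le_kt; rewrite ge_max [reps <= _]le_max lexx orbT andbT.
apply: bigmax_le => [|i _]; first exact: rbar_ge0.
by apply: dist_le_rbar; rewrite (leq_trans _ le_kt) // -ltnS.
Qed.

Lemma dist_le_dbar k t : (k <= t)%N -> enorm (x k - xs) <= D t.
Proof.
move=> le_kt.
exact: (le_bigmax _ (fun j : 'I_t.+1 => enorm (x j - xs)) (Ordinal (le_kt : k < t.+1)%N)).
Qed.

Lemma dbar_le t : D t <= enorm (x t - xs) + 2 * r t.
Proof.
apply: bigmax_le => [|i _]; first by rewrite addr_ge0 ?mulr_ge0 ?enorm_ge0 ?rbar_ge0.
have -> : x i - xs = (x i - x 0%N) + ((x t - xs) - (x t - x 0%N)).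
  by apply/rowP => j; rewrite !mxE; ring.
have := enormD_le (x i - x 0%N) ((x t - xs) - (x t - x 0%N)).
have := enormD_le (x t - xs) (- (x t - x 0%N)); rewrite enormN.
have := dist_le_rbar (ltnSE (ltn_ord i)); have := dist_le_rbar (leqnn t).
lra.
Qed.

Hypothesis vk_gt0 : forall k, 0 < vk x g reps k.
Hypothesis dowg_step : forall k, x k.+1 = x k - dowg_eta x g reps k *: g k.

Lemma dowg_step_identity k :
  r k ^+ 2 * dotv (g k) (x k - xs) =
  Num.sqrt (V k.+1) * (enorm (x k - xs) ^+ 2 - enorm (x k.+1 - xs) ^+ 2) / 2
  + r k ^+ 2 * (r k ^+ 2 * enorm (g k) ^+ 2 / Num.sqrt (V k.+1)) / 2.
Proof.
have -> : x k.+1 - xs = x k - xs - dowg_eta x g reps k *: g k by rewrite dowg_step addrAC.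
rewrite (dotv_step_identity _ _ _ (s := Num.sqrt (V k.+1))) /dowg_eta /vk //.
by rewrite gt_eqF ?sqrtr_gt0 ?vk_gt0.
Qed.

Lemma dowg_weighted_regret_le t :
  \sum_(k < t) r k ^+ 2 * dotv (g k) (x k - xs) <= 2 * r t * (D t + r t) * Num.sqrt (V t).
Proof.
pose a k := r k ^+ 2 * enorm (g k) ^+ 2.
have a_ge0 k : 0 <= a k by rewrite mulr_ge0 ?sqr_ge0.
have V_ge0 n : 0 <= V n by apply: sumr_ge0 => i _; exact: a_ge0.
have V_nondecr n : V n <= V n.+1 by rewrite /Vsum big_ord_recr lerDl; exact: a_ge0.
under eq_bigr => k _ do rewrite dowg_step_identity.
rewrite big_split /= -!mulr_suml.
have distance_part :
    \sum_(k < t) Num.sqrt (V k.+1) * (enorm (x k - xs) ^+ 2 - enorm (x k.+1 - xs) ^+ 2)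
    <= Num.sqrt (V t) * (D t ^+ 2 - enorm (x t - xs) ^+ 2).
  apply: (weighted_telescope_le (w := fun n => Num.sqrt (V n))
                                (e := fun k => enorm (x k - xs) ^+ 2)).
  - exact: sqrtr_ge0.
  - by move=> k; rewrite ler_sqrt ?V_ge0 ?V_nondecr.
  - by move=> k le_kt /=; have := dist_le_dbar le_kt; have := enorm_ge0 (x k - xs); nra.
have gradient_part :
    \sum_(k < t) r k ^+ 2 * (a k / Num.sqrt (V k.+1)) <= r t ^+ 2 * (2 * Num.sqrt (V t)).
  apply: le_trans (_ : r t ^+ 2 * \sum_(k < t) a k / Num.sqrt (V k.+1) <= _).
    rewrite mulr_sumr; apply: ler_sum => k _.
    by rewrite ler_wpM2r ?divr_ge0 ?sqrtr_ge0 // ler_sqr ?nnegrE ?rbar_ge0 ?rbar_nondecr 1?ltnW.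
  by rewrite ler_wpM2l ?sqr_ge0 ?sum_div_sqrt_partial_le.
have dbar_gap : D t ^+ 2 - enorm (x t - xs) ^+ 2 <= 4 * r t * D t.
  have := dbar_le t; have := dist_le_dbar (leqnn t); have := enorm_ge0 (x t - xs); nra.
have := ler_wpM2l (sqrtr_ge0 (V t)) dbar_gap.
have : 0 <= r t ^+ 2 * Num.sqrt (V t) by rewrite mulr_ge0 ?sqr_ge0 ?sqrtr_ge0.
lra.
Qed.
End DoWG.

Theorem lemma4 (R : realType) (d : nat) (f : 'rV[R]_d -> R) (xs x0 : 'rV[R]_d)
  (reps : R) (g x : nat -> 'rV[R]_d) :
  convex_fun f ->
  (forall y : 'rV[R]_d, differentiable f y) ->
  (forall y : 'rV[R]_d, f xs <= f y) ->
  0 < reps ->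
  x 0%N = x0 ->
  (forall k : nat, 0 < vk x g reps k) ->
  (forall k : nat, x k.+1 = x k - dowg_eta x g reps k *: g k) ->
  forall t : nat,
    \sum_(k < t) rbar x reps k ^+ 2 * dotv (grad f (x k)) (x k - xs)
    <= 2 * rbar x reps t * (dbar x xs t + rbar x reps t) * Num.sqrt (Vsum x g reps t)
       + \sum_(k < t) rbar x reps k ^+ 2 * dotv (grad f (x k) - g k) (x k - xs).
Proof.
move=> _ _ _ _ _ vk_gt0 dowg_step t.
have split_grad k : dotv (grad f (x k)) (x k - xs)
    = dotv (g k) (x k - xs) + dotv (grad f (x k) - g k) (x k - xs).
  by rewrite dotvBl addrCA subrr addr0.
under eq_bigr => k _ do rewrite split_grad mulrDr.
by rewrite big_split lerD2r dowg_weighted_regret_le.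
Qed.
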